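(* Let $P^1,\dots,P^m\in\mathbb{R}^n$ ($m\ge2$) be in general position. For $k=0,1,\dots,m-2$ let $L_k=L(P^{k+1},\dots,P^m)$. Let $Q^0\in L_0$ be the equidistant point from $P^1,\dots,P^m$, and define recursively $Q^k=\pi(Q^{k-1}\,|\,L_k)$ for $k=1,\dots,m-2$. Let $\boldsymbol\lambda^k=(\lambda^k_1,\dots,\lambda^k_m)$ be the barycentric coordinate of $Q^k$ about $P^1,\dots,P^m$. Let $K\in\{0,1,\dots,m-2\}$ and assume: for every $k=0,1,\dots,K-1$, $\lambda^k_i=0$ for $i=1,\dots,k$, $\lambda^k_{k+1}<0$, and $\lambda^k_i>0$ for $i=k+2,\dots,m$; and $\lambda^K_i=0$ for $i=1,\dots,K$ and $\lambda^K_i>0$ for $i=K+1,\dots,m$. Then the center of the smallest enclosing circle of $P^1,\dots,P^m$ is $Q^\ast=Q^K$ and its radius is $d^\ast=d(P^{K+1},Q^K)$.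
   Context: $d$ is the Euclidean distance on $\mathbb{R}^n$. Points $P^1,\dots,P^m$ are in general position if $P^2-P^1,\dots,P^m-P^1$ are linearly independent. $L(S^1,\dots,S^r)$ denotes the affine subspace spanned by the points $S^1,\dots,S^r$ (all affine combinations). For $Q'\in\mathbb{R}^n$ and an affine subspace $L$, $\pi(Q'|L)$ is the orthogonal projection, i.e. the unique $Q\in L$ minimizing $d(Q,Q')$. The barycentric coordinate of $Q\in L(P^1,\dots,P^m)$ about $P^1,\dots,P^m$ is the unique $\boldsymbol\lambda\in\mathbb{R}^m$ with $\sum_i\lambda_i=1$ and $Q=\sum_i\lambda_iP^i$. The equidistant point is the unique $Q^0\in L(P^1,\dots,P^m)$ with $d(P^1,Q^0)=\dots=d(P^m,Q^0)$. The smallest enclosing circle of $P^1,\dots,P^m$ is the ball whose center $Q^\ast$ attains $\min_{Q\in\mathbb{R}^n}\max_{1\le i\le m}d(P^i,Q)$ and whose radius $d^\ast$ is this minimum value. *)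

From HB Require Import structures.
From mathcomp Require Import all_boot all_order all_algebra.
Set Implicit Arguments. Unset Strict Implicit. Unset Printing Implicit Defensive.
Import Order.TTheory GRing.Theory Num.Theory.
Local Open Scope ring_scope.

Section Defs.
Variables (R : rcfType) (n m : nat).

Definition dist (x y : 'rV[R]_n) : R :=
  Num.sqrt (\sum_(j < n) (x 0 j - y 0 j) ^+ 2).

(* P^1..P^m (0-based: P 0 .. P (m-1)) in general position:
   P i - P i0 (i <> i0, i0 the first index) are linearly independent. *)
Definition general_position (P : 'I_m -> 'rV[R]_n) : Prop :=
  forall i0 : 'I_m, val i0 = 0%N ->
  forall c : 'I_m -> R,
    \sum_(i | i != i0) c i *: (P i - P i0) = 0 ->
    forall i, i != i0 -> c i = 0.

Definition affine_span (P : 'I_m -> 'rV[R]_n) (S : pred 'I_m) : 'rV[R]_n -> Prop :=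
  fun x => exists lam : 'I_m -> R,
    (forall i, ~~ S i -> lam i = 0) /\ \sum_i lam i = 1 /\ x = \sum_i lam i *: P i.

(* L_k = L(P^{k+1},...,P^m) in 1-based indexing = span of P i, k <= i (0-based) *)
Definition Lk (P : 'I_m -> 'rV[R]_n) (k : nat) : 'rV[R]_n -> Prop :=
  affine_span P (fun i => (k <= val i)%N).

Definition is_proj (L : 'rV[R]_n -> Prop) (Q' Q : 'rV[R]_n) : Prop :=
  L Q /\ forall Q2, L Q2 -> dist Q Q' <= dist Q2 Q'.

Definition is_bary (P : 'I_m -> 'rV[R]_n) (Q : 'rV[R]_n) (lam : 'I_m -> R) : Prop :=
  \sum_i lam i = 1 /\ Q = \sum_i lam i *: P i.

Definition is_equidistant (P : 'I_m -> 'rV[R]_n) (Q : 'rV[R]_n) : Prop :=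
  Lk P 0 Q /\ forall i j, dist (P i) Q = dist (P j) Q.

Definition maxdist (P : 'I_m -> 'rV[R]_n) (Q : 'rV[R]_n) : R :=
  \big[Num.max/0]_(i < m) dist (P i) Q.

Definition sec_center (P : 'I_m -> 'rV[R]_n) (Q : 'rV[R]_n) : Prop :=
  forall Q', maxdist P Q <= maxdist P Q'.

Definition sec_radius (P : 'I_m -> 'rV[R]_n) (d : R) : Prop :=
  exists Q, sec_center P Q /\ d = maxdist P Q.

End Defs.

(** Each projection step moves Q^{k-1} orthogonally to L_k, so the descent
    Q^k - Q^K is orthogonal to L_K, and the sign pattern of lambda^k forces
    <Q^k - Q^K, P^i - P^{K+1}> <= 0 for every i > k.  For k = 0 this inner
    product is half the difference of the squared distances from Q^K to P^i and
    to P^{K+1} (because Q^0 is equidistant), so every P^i lies within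
    r = d(P^{K+1}, Q^K) of Q^K, with equality for i > K.  Since Q^K is a convex
    combination of the points on that sphere, averaging the squared distances
    with the weights lambda^K gives max_i d(P^i, Q)^2 >= r^2 + d(Q^K, Q)^2 for
    every Q, hence Q^K is the unique center and r the radius. *)
From mathcomp Require Import all_boot all_order all_algebra.
From mathcomp Require Import ring lra zify.
Import Order.TTheory GRing.Theory Num.Theory.
Local Open Scope ring_scope.
Set Implicit Arguments. Unset Strict Implicit. Unset Printing Implicit Defensive.

Lemma nat_down_ind (N : nat) (Pr : nat -> Prop) :
  Pr N -> (forall k, (k < N)%N -> Pr k.+1 -> Pr k) ->
  forall k, (k <= N)%N -> Pr k.
Proof.
move=> PrN PrS k le_kN; rewrite -(subKn le_kN).
elim: (N - k)%N (leq_subr k N) => [|d IH] le_dN; first by rewrite subn0.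
by apply: PrS; [lia | rewrite subnSK //; apply: IH; lia].
Qed.

Lemma quad_ge0_linear_eq0 (R : realFieldType) (b c : R) :
  0 <= c -> (forall t, 0 <= 2 * t * b + t ^+ 2 * c) -> b = 0.
Proof.
move=> c_ge0 quad_ge0; set s := - b / (c + 1).
have c1_gt0 : 0 < c + 1 by lra.
have bE : b = - (s * (c + 1)) by rewrite /s divfK ?gt_eqF // opprK.
have := quad_ge0 s; rewrite bE => h.
suff -> : s = 0 by rewrite mul0r oppr0.
by apply/eqP; rewrite -sqrf_eq0 eq_le sqr_ge0 andbT; nra.
Qed.

Section InnerProduct.
Variables (R : rcfType) (n : nat).
Implicit Types x y z : 'rV[R]_n.

Definition dot x y : R := \sum_(j < n) x 0 j * y 0 j.

Lemma dotC x y : dot x y = dot y x.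
Proof. by apply: eq_bigr => j _; rewrite mulrC. Qed.

Lemma dot0l y : dot 0 y = 0.
Proof. by rewrite /dot big1 // => j _; rewrite mxE mul0r. Qed.

Lemma dotDl x y z : dot (x + y) z = dot x z + dot y z.
Proof. by rewrite /dot -big_split; apply: eq_bigr => j _; rewrite mxE mulrDl. Qed.

Lemma dotNl x y : dot (- x) y = - dot x y.
Proof. by rewrite /dot -sumrN; apply: eq_bigr => j _; rewrite mxE mulNr. Qed.

Lemma dotBl x y z : dot (x - y) z = dot x z - dot y z.
Proof. by rewrite dotDl dotNl. Qed.

Lemma dotZl a x y : dot (a *: x) y = a * dot x y.
Proof. by rewrite /dot mulr_sumr; apply: eq_bigr => j _; rewrite mxE mulrA. Qed.

Lemma dot0r y : dot y 0 = 0.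
Proof. by rewrite dotC dot0l. Qed.

Lemma dotDr x y z : dot z (x + y) = dot z x + dot z y.
Proof. by rewrite dotC dotDl !(dotC z). Qed.

Lemma dotBr x y z : dot z (x - y) = dot z x - dot z y.
Proof. by rewrite dotC dotBl !(dotC z). Qed.

Lemma dotZr a x y : dot y (a *: x) = a * dot y x.
Proof. by rewrite dotC dotZl dotC. Qed.

Lemma dot_sumr (I : finType) (F : I -> 'rV[R]_n) y :
  dot y (\sum_i F i) = \sum_i dot y (F i).
Proof. exact: (big_morph (dot y) (fun a b => dotDr a b y) (dot0r y)). Qed.

Lemma dotxx_ge0 x : 0 <= dot x x.
Proof. by apply: sumr_ge0 => j _; rewrite -expr2 sqr_ge0. Qed.

Lemma dotxx_eq0 x : dot x x = 0 -> x = 0.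
Proof.
move=> x0; apply/rowP => j; rewrite mxE; apply/eqP; rewrite -sqrf_eq0.
have sq_ge0 k : true -> 0 <= x 0 k ^+ 2 by rewrite sqr_ge0.
have sum_sq0 : \sum_k x 0 k ^+ 2 = 0.
  by rewrite -[RHS]x0; apply: eq_bigr => k _; rewrite expr2.
by apply/eqP; apply: (psumr_eq0P sq_ge0 sum_sq0).
Qed.

Lemma dot_sqrD x y : dot (x + y) (x + y) = dot x x + 2 * dot x y + dot y y.
Proof. rewrite dotDl !dotDr (dotC y x); ring. Qed.

Lemma dist_dot x y : dist x y = Num.sqrt (dot (x - y) (x - y)).
Proof. by congr Num.sqrt; apply: eq_bigr => j _; rewrite !mxE expr2. Qed.

Lemma dist_eq_sqr x y z w :
  dist x y = dist z w -> dot (x - y) (x - y) = dot (z - w) (z - w).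
Proof. by rewrite !dist_dot => /eqP; rewrite eqr_sqrt ?dotxx_ge0 // => /eqP. Qed.

Lemma dot_affine_comb (m : nat) (P : 'I_m -> 'rV[R]_n) (l : 'I_m -> R) y z :
  \sum_i l i = 1 -> dot y (\sum_i l i *: P i - z) = \sum_i l i * dot y (P i - z).
Proof.
move=> l_sum1; have -> : \sum_i l i *: P i - z = \sum_i l i *: (P i - z).
  by rewrite (eq_bigr _ (fun i _ => scalerBr _ _ _)) sumrB -scaler_suml l_sum1 scale1r.
by rewrite dot_sumr; apply: eq_bigr => i _; rewrite dotZr.
Qed.

Lemma sqdist_equidistant (a b q x : 'rV[R]_n) :
  dot (a - q) (a - q) = dot (b - q) (b - q) ->
  dot (a - x) (a - x) = dot (b - x) (b - x) + 2 * dot (q - x) (a - b).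
Proof.
move=> eq_aq; have split_x c : c - x = (c - q) + (q - x) by rewrite addrA subrK.
have -> : a - b = (a - q) - (b - q) by rewrite opprB addrA subrK.
rewrite (split_x a) (split_x b) (dot_sqrD (a - q)) (dot_sqrD (b - q)) eq_aq.
by rewrite (dotC (q - x) (_ - _ - _)) (dotBl (a - q)); ring.
Qed.

End InnerProduct.

Section Projection.
Variables (R : rcfType) (n m : nat) (P : 'I_m -> 'rV[R]_n).

Lemma affine_span_point (S : pred 'I_m) i : S i -> affine_span P S (P i).
Proof.
move=> Si; exists (fun j => (j == i)%:R); split; [|split].
- by move=> j; apply: contraNeq; rewrite pnatr_eq0 eqb0 negbK => /eqP ->.
- by rewrite (bigD1 i) //= eqxx big1 ?addr0 // => j /negbTE ->.
- rewrite (bigD1 i) //= eqxx scale1r big1 ?addr0 // => j /negbTE ->.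
  by rewrite scale0r.
Qed.

Lemma affine_span_comb (S : pred 'I_m) x y t :
  affine_span P S x -> affine_span P S y ->
  affine_span P S ((1 - t) *: x + t *: y).
Proof.
move=> [lx [lx0 [lx1 ->]]] [ly [ly0 [ly1 ->]]].
exists (fun j => (1 - t) * lx j + t * ly j); split; [|split].
- by move=> j Sj; rewrite lx0 // ly0 // !mulr0 addr0.
- by rewrite big_split -!mulr_sumr lx1 ly1 /= !mulr1 subrK.
- rewrite !scaler_sumr -big_split /=; apply: eq_bigr => j _.
  by rewrite [RHS]scalerDl !scalerA.
Qed.

(* Variational characterization: moving Q towards X along the segment
   [Q, X] cannot decrease the distance to Q'. *)
Lemma proj_orthogonal (S : pred 'I_m) Q' Q X :
  is_proj (affine_span P S) Q' Q -> affine_span P S X ->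
  dot (Q - Q') (X - Q) = 0.
Proof.
move=> [SQ Q_min] SX; apply: quad_ge0_linear_eq0 (dotxx_ge0 (X - Q)) _ => t.
have := Q_min _ (affine_span_comb t SQ SX).
rewrite !dist_dot ler_sqrt ?dotxx_ge0 //.
have -> : (1 - t) *: Q + t *: X - Q' = (Q - Q') + t *: (X - Q).
  by apply/rowP => j; rewrite !mxE; ring.
rewrite (dot_sqrD (Q - Q')) !dotZr dotZl; lra.
Qed.

Lemma proj_Lk_orthogonal k Q' Q (i i' : 'I_m) :
  is_proj (Lk P k) Q' Q -> (k <= val i)%N -> (k <= val i')%N ->
  dot (Q - Q') (P i - P i') = 0.
Proof.
move=> Q_proj ki ki'.
have -> : P i - P i' = (P i - Q) - (P i' - Q) by rewrite opprB addrA subrK.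
rewrite dotBr !(proj_orthogonal Q_proj) ?subrr //; exact: affine_span_point.
Qed.

End Projection.

Section EnclosingBall.
Variables (R : rcfType) (n m : nat) (P : 'I_m -> 'rV[R]_n).
Variables (c : 'rV[R]_n) (lam : 'I_m -> R) (r2 : R).
Hypothesis lam_ge0 : forall i, 0 <= lam i.
Hypothesis lam_sum1 : \sum_i lam i = 1.
Hypothesis c_bary : c = \sum_i lam i *: P i.
Hypothesis P_inside : forall i, dot (P i - c) (P i - c) <= r2.
Hypothesis P_on_sphere : forall i, 0 < lam i -> dot (P i - c) (P i - c) = r2.

Lemma maxdist_ge0 Q : 0 <= maxdist P Q.
Proof. exact: bigmax_ge_id. Qed.

Lemma sqdist_le_maxdist i Q : dot (P i - Q) (P i - Q) <= maxdist P Q ^+ 2.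
Proof.
have := le_bigmax 0 (fun i => dist (P i) Q) i.
rewrite -ler_sqrt ?exprn_ge0 ?maxdist_ge0 // sqrtr_sqr ger0_norm ?maxdist_ge0 //.
by apply: le_trans; rewrite dist_dot.
Qed.

(* The cross terms vanish because c is the lam-weighted mean of the P i. *)
Lemma weighted_sqdist Q :
  \sum_i lam i * dot (P i - Q) (P i - Q) = r2 + dot (c - Q) (c - Q).
Proof.
have weighted_sphere i : lam i * dot (P i - c) (P i - c) = lam i * r2.
  have [/P_on_sphere -> //|lam_le0] := ltrP 0 (lam i).
  have -> : lam i = 0 by apply/le_anti; rewrite lam_le0 lam_ge0.
  by rewrite !mul0r.
have cross0 : \sum_i lam i * (2 * dot (P i - c) (c - Q)) = 0.
  under eq_bigr do rewrite mulrCA dotC.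
  by rewrite -mulr_sumr -dot_affine_comb // -c_bary subrr dot0r mulr0.
have split_c i : P i - Q = (P i - c) + (c - Q) by rewrite addrA subrK.
under eq_bigr do rewrite split_c dot_sqrD !mulrDr weighted_sphere.
by rewrite !big_split /= cross0 -!mulr_suml lam_sum1; ring.
Qed.

Lemma maxdist_lower_bound Q : r2 + dot (c - Q) (c - Q) <= maxdist P Q ^+ 2.
Proof.
rewrite -weighted_sqdist -[leRHS]mul1r -lam_sum1 mulr_suml.
by apply: ler_sum => i _; apply: ler_wpM2l (sqdist_le_maxdist i Q).
Qed.

Lemma radius_sqr_ge0 : 0 <= r2.
Proof.
have := weighted_sqdist c; rewrite subrr dot0l addr0 => <-.
by apply: sumr_ge0 => i _; rewrite mulr_ge0 ?dotxx_ge0.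
Qed.

Lemma maxdist_center : maxdist P c = Num.sqrt r2.
Proof.
apply/le_anti/andP; split.
  apply: bigmax_le => [|i _]; first exact: sqrtr_ge0.
  by rewrite dist_dot ler_sqrt ?radius_sqr_ge0 ?P_inside.
have := maxdist_lower_bound c; rewrite subrr dot0l addr0.
by rewrite -ler_sqrt ?exprn_ge0 ?maxdist_ge0 // sqrtr_sqr ger0_norm ?maxdist_ge0.
Qed.

Lemma sec_centerE Q : sec_center P Q <-> Q = c.
Proof.
split=> [Q_center | -> Q'].
  have := Q_center c; rewrite maxdist_center => maxQ.
  have maxQ_sqr : maxdist P Q ^+ 2 <= r2.
    by rewrite -(sqr_sqrtr radius_sqr_ge0) ler_pXn2r ?nnegrE ?maxdist_ge0 ?sqrtr_ge0.
  have dot_cQ0 : dot (c - Q) (c - Q) = 0.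
    by have := maxdist_lower_bound Q; have := dotxx_ge0 (c - Q); lra.
  by apply/esym/subr0_eq/dotxx_eq0.
rewrite maxdist_center -(ger0_norm (maxdist_ge0 Q')) -sqrtr_sqr ler_sqrt ?sqr_ge0 //.
by have := maxdist_lower_bound Q'; have := dotxx_ge0 (c - Q'); lra.
Qed.

Lemma sec_radiusE d : sec_radius P d <-> d = Num.sqrt r2.
Proof.
split=> [[Q [/sec_centerE -> ->]] | ->]; first exact: maxdist_center.
by exists c; rewrite sec_centerE maxdist_center.
Qed.

End EnclosingBall.

Section Descent.
Variables (R : rcfType) (n m : nat) (P : 'I_m -> 'rV[R]_n).
Variables (Q : nat -> 'rV[R]_n) (lam : nat -> 'I_m -> R) (K : nat) (iK : 'I_m).
Hypothesis Q_proj : forall k, (1 <= k <= m - 2)%N -> is_proj (Lk P k) (Q k.-1) (Q k).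
Hypothesis lam_bary : forall k, (k <= m - 2)%N -> is_bary P (Q k) (lam k).
Hypothesis K_le : (K <= m - 2)%N.
Hypothesis lam_before : forall k, (k < K)%N -> forall i : 'I_m,
  ((val i < k)%N -> lam k i = 0) /\ (val i = k -> lam k i < 0) /\
  ((k < val i)%N -> 0 < lam k i).
Hypothesis lam_at_K : forall i : 'I_m,
  ((val i < K)%N -> lam K i = 0) /\ ((K <= val i)%N -> 0 < lam K i).
Hypothesis iK_val : val iK = K.

Lemma descent_split k : Q k - Q K = (Q k.+1 - Q K) - (Q k.+1 - Q k).
Proof. by rewrite opprB [RHS]addrC addrA subrK. Qed.

Lemma descent_step_orthogonal k (i : 'I_m) : (k < K)%N -> (k < val i)%N ->
  dot (Q k.+1 - Q k) (P i - P iK) = 0.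
Proof. by move=> kK ki; apply: (proj_Lk_orthogonal (Q_proj _)); lia. Qed.

Lemma descent_orthogonal (i : 'I_m) k : (K <= val i)%N -> (k <= K)%N ->
  dot (Q k - Q K) (P i - P iK) = 0.
Proof.
move=> Ki; move: k; apply: (@nat_down_ind K) => [|k kK IH].
  by rewrite subrr dot0l.
by rewrite descent_split dotBl IH descent_step_orthogonal ?subrr //; lia.
Qed.

Lemma QK_orthogonal k : (k <= K)%N -> dot (Q k - Q K) (Q K - P iK) = 0.
Proof.
move=> kK; have [lamK_sum1 QK_bary] := lam_bary K_le.
rewrite {2}QK_bary dot_affine_comb //; apply: big1 => i _.
have [i_lt_K|K_le_i] := ltnP (val i) K; first by rewrite (lam_at_K i).1 // mul0r.
by rewrite descent_orthogonal ?mulr0.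
Qed.

(* At the pivot index i = k the weight lam k i is negative, while all other
   indices contribute nonpositive terms; the equality
   <E, Q k - P iK> = <E, E> >= 0 with E = Q k - Q K then forces the sign. *)
Lemma descent_pivot k (i : 'I_m) : (k < K)%N -> val i = k ->
  (forall j : 'I_m, (k < val j)%N -> dot (Q k - Q K) (P j - P iK) <= 0) ->
  dot (Q k - Q K) (P i - P iK) <= 0.
Proof.
move=> kK ik others_le0; set E := Q k - Q K.
have [lamk_sum1 Qk_bary] := lam_bary (ltnW (leq_trans kK K_le)).
have lamk_pivot := (lam_before kK i).2.1 ik.
have EQk : dot E (Q k - P iK) = dot E E.
  have -> : Q k - P iK = E + (Q K - P iK) by rewrite addrA subrK.
  by rewrite dotDr QK_orthogonal ?addr0 // ltnW.
have rest_le0 : \sum_(j | j != i) lam k j * dot E (P j - P iK) <= 0.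
  apply: sumr_le0 => j ji.
  have [jk|kj] := ltnP (val j) k; first by rewrite (lam_before kK j).1 // mul0r.
  have kj' : (k < val j)%N.
    by rewrite ltn_neqAle kj andbT -ik; apply: contra ji => /eqP/val_inj ->.
  by rewrite pmulr_rle0 ?others_le0 // (lam_before kK j).2.2.
have := dotxx_ge0 E; rewrite -EQk {1}Qk_bary dot_affine_comb // (bigD1 i) //=.
nra.
Qed.

Lemma descent_nonpositive k (i : 'I_m) : (k <= K)%N -> (k <= val i)%N ->
  dot (Q k - Q K) (P i - P iK) <= 0.
Proof.
move=> kK; move: k kK i; apply: (@nat_down_ind K) => [|k kK IH] i ki.
  by rewrite subrr dot0l.
have others_le0 (j : 'I_m) : (k < val j)%N -> dot (Q k - Q K) (P j - P iK) <= 0.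
  by move=> kj; rewrite descent_split dotBl descent_step_orthogonal ?subr0 ?IH.
have [kj|] := ltnP k (val i); first exact: others_le0.
by move=> ik; apply: descent_pivot => //; apply/eqP; rewrite eqn_leq ik ki.
Qed.

End Descent.

(* 0-based indices: paper's P^{i} is P (i-1); Q k and lam k are Q^k, lambda^k. *)
Theorem theorem2 (R : rcfType) (n m : nat) (Hm : (2 <= m)%N)
  (P : 'I_m -> 'rV[R]_n) (HP : general_position P)
  (Q : nat -> 'rV[R]_n) (lam : nat -> 'I_m -> R)
  (HQ0 : is_equidistant P (Q 0%N))
  (HQ : forall k : nat, (1 <= k <= m - 2)%N -> is_proj (Lk P k) (Q k.-1) (Q k))
  (Hlam : forall k : nat, (k <= m - 2)%N -> is_bary P (Q k) (lam k))
  (K : nat) (HK : (K <= m - 2)%N)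
  (Hbefore : forall k : nat, (k < K)%N ->
     forall i : 'I_m,
       ((val i < k)%N -> lam k i = 0) /\
       (val i = k -> lam k i < 0) /\
       ((k < val i)%N -> 0 < lam k i))
  (HKlam : forall i : 'I_m,
       ((val i < K)%N -> lam K i = 0) /\
       ((K <= val i)%N -> 0 < lam K i))
  (iK : 'I_m) (HiK : val iK = K) :
  (forall Qs : 'rV[R]_n, sec_center P Qs <-> Qs = Q K) /\
  (forall d : R, sec_radius P d <-> d = dist (P iK) (Q K)).
Proof.
set r2 := dot (P iK - Q K) (P iK - Q K).
have sqdistE i : dot (P i - Q K) (P i - Q K)
    = r2 + 2 * dot (Q 0%N - Q K) (P i - P iK).
  by apply/sqdist_equidistant/dist_eq_sqr/HQ0.2.
have [lamK_sum1 QK_bary] := Hlam K HK.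
have lamK_ge0 i : 0 <= lam K i.
  by have [/(HKlam i).1 -> | /(HKlam i).2 /ltW] := ltnP (val i) K.
have P_inside i : dot (P i - Q K) (P i - Q K) <= r2.
  have := descent_nonpositive HQ Hlam HK Hbefore HKlam HiK (leq0n K) (leq0n i).
  by rewrite sqdistE; lra.
have P_on_sphere i : 0 < lam K i -> dot (P i - Q K) (P i - Q K) = r2.
  move=> lam_pos; rewrite sqdistE (descent_orthogonal HQ HK HiK) ?mulr0 ?addr0 //.
  by apply: contraTT lam_pos; rewrite -ltnNge => /(HKlam i).1 ->; rewrite ltxx.
split=> [Qs | d].
  exact: (sec_centerE lamK_ge0 lamK_sum1 QK_bary P_inside P_on_sphere).
by rewrite (sec_radiusE lamK_ge0 lamK_sum1 QK_bary P_inside P_on_sphere) dist_dot.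
Qed.
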